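(* Let $(X,\rho,\mu)$ be a space of homogeneous type. Then $X$ has infinitely many points if and only if for every $N>0$ there exist balls $B_0$ and $B_1$ in $X$ such that $\mu(B_1)>N\mu(B_0)$.
   Context: A space of homogeneous type $(X,\rho,\mu)$: $\rho$ is a quasi-metric on $X$, i.e. it satisfies the axioms of a metric except that the triangle inequality is replaced by $\rho(x,y)\le A_0(\rho(x,z)+\rho(z,y))$ for some constant $A_0\ge 1$; balls are $B(x,r)=\{y\in X:\rho(x,y)<r\}$; $\mu$ is a positive Borel measure defined on a $\sigma$-algebra containing the balls, with the doubling property: there is $C\ge1$ such that $0<\mu(B(x,2r))\le C\mu(B(x,r))<\infty$ for all $x\in X$, $r>0$. The smallest such $C$ is the doubling constant $C_\mu$. *)

From Stdlib Require Import Reals.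
Open Scope R_scope.

Record quasi_metric (X : Type) (rho : X -> X -> R) (A0 : R) : Prop := {
  qm_A0 : 1 <= A0;
  qm_nonneg : forall x y, 0 <= rho x y;
  qm_zero : forall x y, rho x y = 0 <-> x = y;
  qm_sym : forall x y, rho x y = rho y x;
  qm_tri : forall x y z, rho x y <= A0 * (rho x z + rho z y)
}.

Definition ball {X : Type} (rho : X -> X -> R) (x : X) (r : R) : X -> Prop :=
  fun y => rho x y < r.

Record sigma_algebra (X : Type) (M : (X -> Prop) -> Prop) : Prop := {
  sa_empty : M (fun _ => False);
  sa_compl : forall A, M A -> M (fun x => ~ A x);
  sa_union : forall A : nat -> X -> Prop, (forall n, M (A n)) ->
               M (fun x => exists n, A n x)
}.

(* Positive measure on M with values in [0, +oo]; [None] encodes +oo. *)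
Record measure (X : Type) (M : (X -> Prop) -> Prop) (mu : (X -> Prop) -> option R)
  : Prop := {
  me_empty : mu (fun _ => False) = Some 0;
  me_nonneg : forall A a, M A -> mu A = Some a -> 0 <= a;
  me_sigma_add : forall A : nat -> X -> Prop,
    (forall n, M (A n)) ->
    (forall i j, i <> j -> forall x, A i x -> A j x -> False) ->
    forall l, mu (fun x => exists n, A n x) = Some l <->
      exists f : nat -> R, (forall n, mu (A n) = Some (f n)) /\
                           Un_cv (fun n => sum_f_R0 f n) l
}.

Record homogeneous_type (X : Type) (rho : X -> X -> R) (A0 : R)
  (M : (X -> Prop) -> Prop) (mu : (X -> Prop) -> option R) (C : R) : Prop := {
  ht_qm : quasi_metric X rho A0;
  ht_sa : sigma_algebra X M;
  ht_measure : measure X M mu;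
  ht_balls : forall x r, 0 < r -> M (ball rho x r);
  ht_C : 1 <= C;
  ht_doubling : forall x r, 0 < r -> exists m m2,
      mu (ball rho x r) = Some m /\ mu (ball rho x (2 * r)) = Some m2 /\
      0 < m2 /\ m2 <= C * m
}.

Definition finite_type (X : Type) : Prop := exists l : list X, forall x, List.In x l.

From Stdlib Require Import Reals Lra Lia List Classical FunctionalExtensionality PropExtensionality.
Open Scope R_scope.

(* If X = {x_1,...,x_n}, every point is isolated:
     for small radius the ball B(x,δ_x) is {x}, which is contained in every ball
     centred at x.  Hence every ball has measure between the positive number
     min_x μ(B(x,δ_x)) and the measure of one ball containing the whole space.
   - Infinite => unbounded ratios.  For every k one finds k centres that are
     pairwise 2·A0·r apart; the balls of radius r around them are pairwise
     disjoint and lie in one large ball B.  If μ(B) <= N μ(B_i) for all i, then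
     countable additivity gives k μ(B)/N <= μ(B), impossible for k > N. *)

Lemma pred_ext {X : Type} (P Q : X -> Prop) : (forall x, P x <-> Q x) -> P = Q.
Proof.
  intros HPQ; apply functional_extensionality; intro x.
  apply propositional_extensionality; auto.
Qed.

Section MeasureFacts.
Variables (X : Type) (M : (X -> Prop) -> Prop) (mu : (X -> Prop) -> option R).
Hypothesis sa : sigma_algebra X M.
Hypothesis me : measure X M mu.

Lemma measurable_union2 A B : M A -> M B -> M (fun x => A x \/ B x).
Proof.
  intros HA HB.
  replace (fun x => A x \/ B x)
    with (fun x => exists n, (match n with 0%nat => A | _ => B end) x).
  - apply (sa_union X M sa). intros [|n]; auto.
  - apply pred_ext; intro x; split.
    + intros [[|n] Hx]; auto.
    + intros [Hx|Hx]; [exists 0%nat | exists 1%nat]; auto.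
Qed.

Lemma measurable_diff A B : M A -> M B -> M (fun x => A x /\ ~ B x).
Proof.
  intros HA HB.
  replace (fun x => A x /\ ~ B x) with (fun x => ~ (~ A x \/ B x)).
  - apply (sa_compl X M sa), measurable_union2; auto.
    apply (sa_compl X M sa); auto.
  - apply pred_ext; intro x; split.
    + intros Hx; split; [apply NNPP|]; tauto.
    + tauto.
Qed.

(* The family is completed
   to a partition of B by B \ ∪_n A_n, and σ-additivity is applied. *)
Lemma disjoint_partial_sums_le (A : nat -> X -> Prop) B b :
  (forall n, M (A n)) ->
  (forall i j, i <> j -> forall x, A i x -> A j x -> False) ->
  (forall n x, A n x -> B x) -> M B -> mu B = Some b ->
  exists f, (forall n, mu (A n) = Some (f n)) /\ (forall n, 0 <= f n) /\
            forall n, sum_f_R0 f n <= b.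
Proof.
  intros HM Hdisj Hsub HB Hb.
  pose (U := fun x => exists n, A n x).
  pose (P := fun n => match n with 0%nat => fun x => B x /\ ~ U x | S m => A m end).
  assert (HP : forall n, M (P n)).
  { intros [|n]; simpl; auto. apply measurable_diff; auto. apply (sa_union X M sa); auto. }
  assert (HPdisj : forall i j, i <> j -> forall x, P i x -> P j x -> False).
  { intros [|i] [|j] Hij x; simpl; intros Hi Hj.
    - lia.
    - apply (proj2 Hi); exists j; auto.
    - apply (proj2 Hj); exists i; auto.
    - apply (Hdisj i j) with x; auto. }
  assert (HPB : (fun x => exists n, P n x) = B).
  { apply pred_ext; intro x; split.
    - intros [[|n] Hn]; simpl in Hn; [tauto | eapply Hsub; eauto].
    - intros Hx. destruct (classic (U x)) as [[n Hn]|Hn].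
      + exists (S n); auto.
      + exists 0%nat; simpl; auto. }
  assert (HPb : mu (fun x => exists n, P n x) = Some b) by (rewrite HPB; auto).
  apply (me_sigma_add X M mu me P HP HPdisj b) in HPb.
  destruct HPb as [g [Hg Hcv]].
  assert (Hgnn : forall n, 0 <= g n) by (intro n; apply (me_nonneg X M mu me (P n)); auto).
  assert (Hgrow : Un_growing (fun n => sum_f_R0 g n)).
  { intro n; simpl. specialize (Hgnn (S n)); lra. }
  exists (fun n => g (S n)). split; [|split].
  - intro n. apply (Hg (S n)).
  - intro n; apply Hgnn.
  - intro n. pose proof (growing_ineq _ _ Hgrow Hcv (S n)) as Hle.
    assert (Hshift : forall m, sum_f_R0 g (S m) = g 0%nat + sum_f_R0 (fun i => g (S i)) m).
    { induction m; simpl in *; lra. }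
    rewrite Hshift in Hle. specialize (Hgnn 0%nat). lra.
Qed.

Lemma measure_mono A B b : M A -> M B -> (forall x, A x -> B x) -> mu B = Some b ->
  exists a, mu A = Some a /\ a <= b.
Proof.
  intros HA HB Hsub Hb.
  destruct (disjoint_partial_sums_le
              (fun n => match n with 0%nat => A | _ => fun _ => False end) B b)
    as [f [Hf [_ Hsum]]]; auto.
  - intros [|n]; auto. apply (sa_empty X M sa).
  - intros [|i] [|j]; simpl; intros; auto.
  - intros [|n] x; simpl; [apply Hsub | tauto].
  - exists (f 0%nat). split; [apply (Hf 0%nat) | apply (Hsum 0%nat)].
Qed.
End MeasureFacts.

Lemma list_upper_bound {A : Type} (g : A -> R) (l : list A) :
  exists b, 0 <= b /\ forall y, In y l -> g y <= b.
Proof.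
  induction l as [|a l [b [Hb IH]]].
  - exists 0; split; [lra | intros y []].
  - exists (Rmax b (g a)); split.
    + eapply Rle_trans; [apply Hb | apply Rmax_l].
    + intros y [<-|Hy]; [apply Rmax_r |].
      eapply Rle_trans; [apply IH; auto | apply Rmax_l].
Qed.

Lemma list_uniform_positive {A : Type} (P : A -> R -> Prop) (l : list A) :
  (forall y a a', 0 < a' -> a' <= a -> P y a -> P y a') ->
  (forall y, In y l -> exists a, 0 < a /\ P y a) ->
  exists a, 0 < a /\ forall y, In y l -> P y a.
Proof.
  intros Hdown. induction l as [|b l IH]; intros Hall.
  - exists 1; split; [lra | intros y []].
  - destruct IH as [a [Ha IHa]]; [intros y Hy; apply Hall; simpl; auto|].
    destruct (Hall b (or_introl eq_refl)) as [ab [Hab Pb]].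
    assert (Hmin : 0 < Rmin a ab) by (apply Rmin_glb_lt; auto).
    exists (Rmin a ab); split; auto.
    intros y [<-|Hy].
    + apply Hdown with ab; auto. apply Rmin_r.
    + apply Hdown with a; auto. apply Rmin_l.
Qed.

Lemma sum_f_R0_ge_const (f : nat -> R) a n :
  (forall i, (i <= n)%nat -> a <= f i) -> INR (S n) * a <= sum_f_R0 f n.
Proof.
  induction n; intros Hf; simpl.
  - specialize (Hf 0%nat (le_n 0)); lra.
  - assert (INR (S n) * a <= sum_f_R0 f n) by (apply IHn; intros; apply Hf; lia).
    specialize (Hf (S n) (le_n _)). rewrite S_INR in *. destruct n; simpl in *; lra.
Qed.

Section QuasiMetricFacts.
Variables (X : Type) (rho : X -> X -> R) (A0 : R).
Hypothesis Q : quasi_metric X rho A0.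

Lemma rho_self x : rho x x = 0.
Proof. apply (qm_zero _ _ _ Q); reflexivity. Qed.

Lemma rho_pos x y : x <> y -> 0 < rho x y.
Proof.
  intros Hxy. destruct (qm_nonneg _ _ _ Q x y) as [Hlt|Heq]; auto.
  exfalso; apply Hxy, (qm_zero _ _ _ Q); auto.
Qed.

Lemma ball_in_ball x y Rxy s w :
  rho x y <= Rxy -> ball rho y s w -> ball rho x (A0 * (Rxy + s)) w.
Proof.
  unfold ball; intros Hxy Hw.
  pose proof (qm_tri _ _ _ Q x w y) as Htri.
  pose proof (qm_A0 _ _ _ Q).
  assert (A0 * (rho x y + rho y w) < A0 * (Rxy + s)) by (apply Rmult_lt_compat_l; lra).
  lra.
Qed.

Lemma far_balls_disjoint x y r w :
  2 * A0 * r <= rho x y -> ball rho x r w -> ball rho y r w -> False.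
Proof.
  unfold ball; intros Hfar Hx Hy.
  pose proof (qm_tri _ _ _ Q x y w) as Htri.
  pose proof (qm_A0 _ _ _ Q).
  rewrite (qm_sym _ _ _ Q w y) in Htri.
  assert (A0 * (rho x w + rho y w) < A0 * (2 * r)) by (apply Rmult_lt_compat_l; lra).
  lra.
Qed.

Lemma separation (l : list X) x :
  exists d, 0 < d /\ forall y, In y l -> y <> x -> d <= rho x y.
Proof.
  apply (list_uniform_positive (fun y d => y <> x -> d <= rho x y)).
  - intros y d d' _ Hd' Hd Hyx. specialize (Hd Hyx); lra.
  - intros y _. destruct (classic (y = x)) as [->|Hyx].
    + exists 1; split; [lra | tauto].
    + exists (rho x y); split; [apply rho_pos; auto | intros; lra].
Qed.

Section Finite.
Variable l : list X.
Hypothesis Hl : forall x, In x l.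

(* In a finite space every point is isolated: a small ball around x is {x},
   hence it is contained in every ball around x. *)
Lemma finite_isolated x :
  exists d, 0 < d /\ forall r w, 0 < r -> ball rho x d w -> ball rho x r w.
Proof.
  destruct (separation l x) as [d [Hd Hsep]].
  exists d; split; auto. unfold ball; intros r w Hr Hw.
  destruct (classic (w = x)) as [->|Hwx].
  - rewrite rho_self; auto.
  - specialize (Hsep w (Hl w) Hwx); lra.
Qed.

Lemma finite_bounded c : exists Rc, 0 < Rc /\ forall w, ball rho c Rc w.
Proof.
  destruct (list_upper_bound (rho c) l) as [b [Hb Hbound]].
  exists (b + 1); split; [lra|]. intro w; unfold ball.
  specialize (Hbound w (Hl w)); lra.
Qed.
End Finite.

(* In an infinite space there are arbitrarily many points that are pairwise
   2 A0 r apart, for some r > 0.  Induction on n: add a point z outside the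
   current configuration and shrink r so that 2 A0 r <= dist(z, others). *)
Lemma separated_centres : ~ finite_type X -> forall n, exists (p : nat -> X) r,
  0 < r /\ forall i j, (i < n)%nat -> (j < n)%nat -> i <> j -> 2 * A0 * r <= rho (p i) (p j).
Proof.
  intros Hinf n. pose proof (qm_A0 _ _ _ Q) as HA.
  induction n as [|n [p [r [Hr Hsep]]]].
  - destruct (classic (exists z : X, True)) as [[z _]|Hempty].
    + exists (fun _ => z), 1; split; [lra | intros; lia].
    + exfalso; apply Hinf. exists nil. intro x; exfalso; apply Hempty; eauto.
  - assert (Hfresh : exists z, ~ In z (map p (seq 0 n))).
    { apply NNPP; intro Hno. apply Hinf. exists (map p (seq 0 n)).
      intro x; apply NNPP; intro Hx; apply Hno; eauto. }
    destruct Hfresh as [z Hz].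
    destruct (separation (map p (seq 0 n)) z) as [d [Hd Hzd]].
    assert (Hzp : forall i, (i < n)%nat -> d <= rho z (p i)).
    { intros i Hi. apply Hzd.
      - apply in_map, in_seq; lia.
      - intros Heq; apply Hz; rewrite <- Heq; apply in_map, in_seq; lia. }
    pose (r' := Rmin r (d / (2 * A0))).
    assert (Hr' : 0 < r') by (apply Rmin_glb_lt; auto; apply Rdiv_lt_0_compat; lra).
    assert (Hrr : 2 * A0 * r' <= 2 * A0 * r) by (apply Rmult_le_compat_l; [lra | apply Rmin_l]).
    assert (Hrd : 2 * A0 * r' <= d).
    { assert (Hle : r' <= d / (2 * A0)) by apply Rmin_r.
      apply Rmult_le_compat_l with (r := 2 * A0) in Hle; [|lra].
      replace (2 * A0 * (d / (2 * A0))) with d in Hle by (field; lra). lra. }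
    exists (fun i => if Nat.eqb i n then z else p i), r'. split; auto.
    intros i j Hi Hj Hij.
    destruct (Nat.eqb_spec i n); destruct (Nat.eqb_spec j n).
    + lia.
    + specialize (Hzp j ltac:(lia)); lra.
    + rewrite (qm_sym _ _ _ Q). specialize (Hzp i ltac:(lia)); lra.
    + specialize (Hsep i j ltac:(lia) ltac:(lia) Hij); lra.
Qed.
End QuasiMetricFacts.

Definition unbounded_ball_ratios {X : Type} (rho : X -> X -> R)
  (mu : (X -> Prop) -> option R) : Prop :=
  forall N : R, 0 < N ->
    exists (x0 : X) (r0 : R) (x1 : X) (r1 : R) (m0 m1 : R),
      0 < r0 /\ 0 < r1 /\
      mu (ball rho x0 r0) = Some m0 /\ mu (ball rho x1 r1) = Some m1 /\
      m1 > N * m0.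

Section HomogeneousType.
Variables (X : Type) (rho : X -> X -> R) (A0 : R) (M : (X -> Prop) -> Prop)
  (mu : (X -> Prop) -> option R) (C : R).
Hypothesis H : homogeneous_type X rho A0 M mu C.

(* Balls have finite positive measure (by the doubling condition, since
   0 < μ(2B) <= C μ(B)). *)
Lemma ball_measure_pos x r : 0 < r -> exists m, mu (ball rho x r) = Some m /\ 0 < m.
Proof.
  intros Hr. destruct (ht_doubling _ _ _ _ _ _ H x r Hr) as [m [m2 [Hm [_ [Hm2 Hdbl]]]]].
  exists m; split; auto. pose proof (ht_C _ _ _ _ _ _ H).
  destruct (Rle_or_lt m 0); auto. assert (C * m <= 0) by nra. lra.
Qed.

Lemma ball_measure_mono x r y s m n : 0 < r -> 0 < s ->
  (forall w, ball rho x r w -> ball rho y s w) ->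
  mu (ball rho x r) = Some m -> mu (ball rho y s) = Some n -> m <= n.
Proof.
  intros Hr Hs Hsub Hm Hn. pose proof (ht_balls _ _ _ _ _ _ H) as Hballs.
  destruct (measure_mono X M mu (ht_sa _ _ _ _ _ _ H) (ht_measure _ _ _ _ _ _ H)
              (ball rho x r) (ball rho y s) n) as [a [Ha Hle]]; auto.
  rewrite Hm in Ha; injection Ha as ->; auto.
Qed.

(* In a finite space the measures of all balls lie in a fixed interval [a, b]
   with a > 0: each ball contains an isolated singleton ball and is contained
   in a ball covering the whole space. *)
Lemma finite_ball_measure_bounds : finite_type X ->
  exists a b, 0 < a /\ 0 < b /\
    forall x r m, 0 < r -> mu (ball rho x r) = Some m -> a <= m <= b.
Proof.
  intros [l Hl]. pose proof (ht_qm _ _ _ _ _ _ H) as Q.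
  destruct l as [|c l0] eqn:Hlist.
  { exists 1, 1; split; [lra | split; [lra |]]. intros x; destruct (Hl x). }
  rewrite <- Hlist in Hl.
  destruct (finite_bounded X rho l Hl c) as [Rc [HRc Hwhole]].
  destruct (ball_measure_pos c Rc HRc) as [b [Hb Hbpos]].
  destruct (list_uniform_positive
              (fun x a => forall r m, 0 < r -> mu (ball rho x r) = Some m -> a <= m) l)
    as [a [Ha Hlow]].
  - intros x a a' _ Ha' Hx r m Hr Hm. specialize (Hx r m Hr Hm); lra.
  - intros x _. destruct (finite_isolated X rho A0 Q l Hl x) as [d [Hd Hiso]].
    destruct (ball_measure_pos x d Hd) as [mx [Hmx Hmxpos]].
    exists mx; split; auto. intros r m Hr Hm.
    apply (ball_measure_mono x d x r); auto.
  - exists a, b; split; [auto | split; [auto |]].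
    intros x r m Hr Hm; split.
    + apply (Hlow x (Hl x) r m Hr Hm).
    + apply (ball_measure_mono x r c Rc); auto.
Qed.

(* Finite direction: bounded measures give bounded ratios (take N = b / a). *)
Lemma finite_bounded_ratios : finite_type X -> ~ unbounded_ball_ratios rho mu.
Proof.
  intros Hfin Hunb.
  destruct (finite_ball_measure_bounds Hfin) as [a [b [Ha [Hb Hbounds]]]].
  destruct (Hunb (b / a) ltac:(apply Rdiv_lt_0_compat; auto))
    as (x0 & r0 & x1 & r1 & m0 & m1 & Hr0 & Hr1 & Hm0 & Hm1 & Hgt).
  destruct (Hbounds x0 r0 m0 Hr0 Hm0) as [Ham0 _].
  destruct (Hbounds x1 r1 m1 Hr1 Hm1) as [_ Hm1b].
  assert (b / a * a <= b / a * m0) by (apply Rmult_le_compat_l; auto;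
    left; apply Rdiv_lt_0_compat; auto).
  replace (b / a * a) with b in * by (field; lra). lra.
Qed.

(* Packing argument: if k > N pairwise disjoint balls of radius r lie in a
   ball B, one of them satisfies μ(B) > N μ(B_i), since otherwise their
   measures would add up to k μ(B) / N > μ(B). *)
Lemma packing_large_ratio (p : nat -> X) r k c Rb N :
  0 < r -> 0 < Rb -> 0 < N -> N < INR k ->
  (forall i j, (i < k)%nat -> (j < k)%nat -> i <> j -> forall w,
      ball rho (p i) r w -> ball rho (p j) r w -> False) ->
  (forall i w, (i < k)%nat -> ball rho (p i) r w -> ball rho c Rb w) ->
  exists i m mB, mu (ball rho (p i) r) = Some m /\ mu (ball rho c Rb) = Some mB /\
    mB > N * m.
Proof.
  intros Hr HRb HN Hk Hdisj Hin. apply NNPP; intro Hno.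
  pose proof (ht_sa _ _ _ _ _ _ H) as sa. pose proof (ht_balls _ _ _ _ _ _ H) as Hballs.
  destruct (ball_measure_pos c Rb HRb) as [mB [HmB HmBpos]].
  pose (F := fun i => if Nat.ltb i k then ball rho (p i) r else fun _ : X => False).
  destruct (disjoint_partial_sums_le X M mu sa (ht_measure _ _ _ _ _ _ H) F (ball rho c Rb) mB)
    as [f [Hf [_ Hsum]]]; auto.
  - intro n; unfold F; destruct (Nat.ltb n k); [auto | apply (sa_empty _ _ sa)].
  - intros i j Hij w; unfold F.
    destruct (Nat.ltb_spec i k); destruct (Nat.ltb_spec j k); try tauto.
    apply (Hdisj i j); auto.
  - intros n w; unfold F; destruct (Nat.ltb_spec n k); [apply Hin; auto | tauto].
  - assert (Hlow : forall i, (i < k)%nat -> mB / N <= f i).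
    { intros i Hi. specialize (Hf i). unfold F in Hf.
      rewrite (proj2 (Nat.ltb_lt i k) Hi) in Hf.
      apply Rnot_gt_le; intro Hsmall. apply Hno. exists i, (f i), mB.
      repeat split; auto.
      apply Rmult_gt_compat_l with (r := N) in Hsmall; auto.
      replace (N * (mB / N)) with mB in Hsmall by (field; lra). lra. }
    destruct k as [|k'].
    + simpl in Hk; lra.
    + assert (Hsumlow : INR (S k') * (mB / N) <= sum_f_R0 f k')
        by (apply sum_f_R0_ge_const; intros i Hi; apply Hlow; lia).
      assert (INR (S k') * (mB / N) > N * (mB / N))
        by (apply Rmult_gt_compat_r; auto; apply Rdiv_lt_0_compat; auto).
      replace (N * (mB / N)) with mB in * by (field; lra).
      specialize (Hsum k'). lra.
Qed.

Lemma infinite_unbounded_ratios : ~ finite_type X -> unbounded_ball_ratios rho mu.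
Proof.
  intros Hinf N HN. pose proof (ht_qm _ _ _ _ _ _ H) as Q.
  pose proof (qm_A0 _ _ _ Q) as HA.
  destruct (INR_unbounded N) as [k Hk].
  destruct (separated_centres X rho A0 Q Hinf k) as (p & r & Hr & Hsep).
  pose (c := p 0%nat).
  destruct (list_upper_bound (rho c) (map p (seq 0 k))) as [Rc [HRc Hbound]].
  assert (HRb : 0 < A0 * (Rc + r)) by (apply Rmult_lt_0_compat; lra).
  destruct (packing_large_ratio p r k c (A0 * (Rc + r)) N)
    as (i & m & mB & Hm & HmB & Hgt); auto.
  - intros i j Hi Hj Hij w. apply far_balls_disjoint with A0; auto.
  - intros i w Hi. apply ball_in_ball; auto.
    apply Hbound, in_map, in_seq; lia.
  - exists (p i), r, c, (A0 * (Rc + r)), m, mB; auto.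
Qed.
End HomogeneousType.

Theorem lemma2p3 (X : Type) (rho : X -> X -> R) (A0 : R)
  (M : (X -> Prop) -> Prop) (mu : (X -> Prop) -> option R) (C : R) :
  homogeneous_type X rho A0 M mu C ->
  (~ finite_type X <->
   forall N : R, 0 < N ->
     exists (x0 : X) (r0 : R) (x1 : X) (r1 : R) (m0 m1 : R),
       0 < r0 /\ 0 < r1 /\
       mu (ball rho x0 r0) = Some m0 /\ mu (ball rho x1 r1) = Some m1 /\
       m1 > N * m0).
Proof.
  intros Hhom. split.
  - exact (infinite_unbounded_ratios X rho A0 M mu C Hhom).
  - intros Hunb Hfin. exact (finite_bounded_ratios X rho A0 M mu C Hhom Hfin Hunb).
Qed.
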